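(* Let $G=(X,b,m,c)$ be a weighted graph with $c\ge0$ and let $p\in[1,\infty)$. (a) For every $\varepsilon>0$ there is a strictly positive function $f_\varepsilon\colon X\to(0,\infty)$ such that every $g\colon X\to\mathbb{R}$ with $g(x)\in(-f_\varepsilon(x),f_\varepsilon(x))$ for all $x\in X$ satisfies $\mathcal{E}_p(g)<\varepsilon$. (b) For every $\varepsilon>0$ and every $u\in D^p$ there is $u_\varepsilon\in D^p$ such that $u_\varepsilon(x)\ne u_\varepsilon(y)$ for all $x\ne y$, $\sup_X|u-u_\varepsilon|<\varepsilon$, and $\mathcal{E}_p(u-u_\varepsilon)<\varepsilon$.
   Context: Weighted graph $G=(X,b,m,c)$: $X$ countably infinite; $b$ symmetric, nonnegative, zero on the diagonal, $\sum_yb(x,y)<\infty$; $m>0$; $c\colon X\to[0,\infty)$; $x\sim y$ iff $b(x,y)>0$; $X$ connected. $\mathcal{E}_p(f)=\frac12\sum_{x,y}b(x,y)|f(x)-f(y)|^p+\sum_xc(x)|f(x)|^p$ and $D^p=\{f:\mathcal{E}_p(f)<\infty\}$. *)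

From HB Require Import structures.
From mathcomp Require Import all_boot all_order all_algebra.
From mathcomp Require Import all_classical all_reals all_analysis.
From Stdlib Require Import Relation_Operators.
Set Implicit Arguments. Unset Strict Implicit. Unset Printing Implicit Defensive.
Import Order.TTheory GRing.Theory Num.Theory.
Local Open Scope classical_set_scope.
Local Open Scope ring_scope.

Section WG.
Context {R : realType} {X : choiceType}.

Definition adj (b : X -> X -> R) (x y : X) : Prop := 0 < b x y.

Definition weighted_graph (b : X -> X -> R) (m : X -> R) (c : X -> R) : Prop :=
  ([set: X] #= [set: nat])%card /\
  (forall x y, b x y = b y x) /\
  (forall x y, 0 <= b x y) /\
  (forall x, b x x = 0) /\
  (forall x, (\esum_(y in [set: X]) (b x y)%:E < +oo)%E) /\
  (forall x, 0 < m x) /\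
  (forall x, 0 <= c x) /\
  (forall x y, clos_refl_trans X (adj b) x y).

Definition energy (b : X -> X -> R) (c : X -> R) (p : R) (f : X -> R) : \bar R :=
  ((2^-1)%:E * \esum_(xy in [set: X * X])
                 (b xy.1 xy.2 * (`|f xy.1 - f xy.2| `^ p))%:E
   + \esum_(x in [set: X]) (c x * (`|f x| `^ p))%:E)%E.

Definition Dp (b : X -> X -> R) (c : X -> R) (p : R) (f : X -> R) : Prop :=
  (energy b c p f < +oo)%E.

Definition sup_dist (u v : X -> R) : \bar R :=
  ereal_sup [set (`|u x - v x|)%:E | x in [set: X]].

End WG.

From HB Require Import structures.
From mathcomp Require Import all_boot all_order all_algebra.
From mathcomp Require Import all_classical all_reals all_analysis.
From mathcomp Require Import lra.
Import Order.TTheory GRing.Theory Num.Theory.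
Local Open Scope classical_set_scope.
Local Open Scope ring_scope.

(* (a) Enumerate X and give the vertex with index n the budget
   w = eps 2^-(n+2).  If |g|^p <= F := w / (1 + 2^p deg + c) pointwise, then
   |g x - g y|^p <= 2^p (F x + F y), and by the symmetry of b the energy of g
   is at most sum_x (2^p deg x + c x) F x <= sum w < eps; take f := F^(1/p).
   (b) Move u by t delta, with delta injective, positive and below
   min(f, eps/2), and t in (0,1) outside the countable set of values
   (u y - u x) / (delta x - delta y) at which two vertices would collide; such
   a t exists because countable sets are Lebesgue-null.  D^p is closed under
   sums, so u + t delta is in D^p. *)

Lemma powR_normD_le {R : realType} (p a b : R) : 0 <= p ->
  `|a + b| `^ p <= 2 `^ p * (`|a| `^ p + `|b| `^ p).
Proof.
move=> p_ge0; wlog ab : a b / `|a| <= `|b|.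
  move=> W; have [|/ltW] := leP `|a| `|b|; first exact: W.
  by rewrite addrC [`|a| `^ p + _]addrC; exact: W.
have ab2 : `|a + b| <= 2 * `|b|.
  by rewrite (le_trans (ler_normD _ _))// mulr2n mulrDl mul1r lerD.
rewrite (le_trans (ge0_ler_powR p_ge0 _ _ ab2)) ?nnegrE ?mulr_ge0// powRM//.
by rewrite ler_wpM2l ?powR_ge0// lerDr powR_ge0.
Qed.

Section ExtendedSums.
Context {R : realType} {T : choiceType}.

Lemma ge0_esumZl (S : set T) (k : R) (a : T -> \bar R) :
  0 <= k -> (forall x, 0 <= a x)%E ->
  (\esum_(x in S) (k%:E * a x) = k%:E * \esum_(x in S) a x)%E.
Proof.
move=> k_ge0 a_ge0; rewrite /esum -ereal_supZl//; last first.
  by apply/set0P; exists 0%E, set0; rewrite ?fsbig_set0//; exact: fsets_set0.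
congr ereal_sup; apply/seteqP; split.
- move=> _ [A SA <-]; exists (\sum_(x \in A) a x)%E; first by exists A.
  exact: ge0_mule_fsumr.
- by move=> _ [_ [A SA <-] <-]; exists A => //; rewrite ge0_mule_fsumr.
Qed.

Lemma esum_le_scaleD (S : set T) (k : R) (a f g : T -> R) :
  0 <= k -> (forall x, 0 <= f x) -> (forall x, 0 <= g x) ->
  (forall x, a x <= k * (f x + g x)) ->
  (\esum_(x in S) (a x)%:E <=
     k%:E * (\esum_(x in S) (f x)%:E + \esum_(x in S) (g x)%:E))%E.
Proof.
move=> k_ge0 f_ge0 g_ge0 afg.
rewrite -esumD// => [|x _|x _]; rewrite ?lee_fin//.
rewrite -(ge0_esumZl _ _ (fun x => (f x)%:E + (g x)%:E)%E) => [|//|x].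
  by apply: le_esum => x _; rewrite -EFinD -EFinM lee_fin.
by rewrite adde_ge0 ?lee_fin.
Qed.

Lemma esum_geometric_le (i : T -> nat) (eps : R) :
  {in [set: T] &, injective i} -> 0 <= eps ->
  (\esum_(x in [set: T]) (eps / (2 ^ (i x).+1)%:R)%:E <= eps%:E)%E.
Proof.
move=> i_inj eps_ge0; pose a n := (eps / (2 ^ n.+1)%:R)%:E.
rewrite -(esum_image _ _ a)// -[i @` _]set_mem_set -nneseries_esum.
  exact: epsilon_trick0.
by move=> n _; rewrite lee_fin divr_ge0.
Qed.

End ExtendedSums.

Section Energy.
Context {R : realType} {X : choiceType}.
Variables (b : X -> X -> R) (c : X -> R) (p : R).
Hypotheses (b_ge0 : forall x y, 0 <= b x y) (c_ge0 : forall x, 0 <= c x).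
Hypothesis p_ge0 : 0 <= p.

Let edge_energy (h : X -> R) : \bar R :=
  \esum_(xy in [set: X * X]) (b xy.1 xy.2 * `|h xy.1 - h xy.2| `^ p)%:E.
Let node_energy (h : X -> R) : \bar R :=
  \esum_(x in [set: X]) (c x * `|h x| `^ p)%:E.

Let energyE h :
  energy b c p h = ((2^-1)%:E * (edge_energy h + node_energy h))%E.
Proof. by []. Qed.

Let edge_energy_ge0 h : (0 <= edge_energy h)%E.
Proof. by apply: esum_ge0 => xy _; rewrite lee_fin mulr_ge0 ?powR_ge0. Qed.

Let node_energy_ge0 h : (0 <= node_energy h)%E.
Proof. by apply: esum_ge0 => x _; rewrite lee_fin mulr_ge0 ?powR_ge0. Qed.

Lemma energyD_le (u g : X -> R) :
  (energy b c p (u \+ g)%R <=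
     (2 `^ p)%:E * (energy b c p u + energy b c p g))%E.
Proof.
have k_ge0 : 0 <= 2 `^ p := powR_ge0 _ _.
have edgeD : (edge_energy (u \+ g)%R <=
    (2 `^ p)%:E * (edge_energy u + edge_energy g))%E.
  apply: esum_le_scaleD => // [xy|xy|[x y] /=]; rewrite ?mulr_ge0 ?powR_ge0//.
  rewrite -mulrDr mulrCA ler_wpM2l// opprD addrACA; exact: powR_normD_le.
have nodeD : (node_energy (u \+ g)%R <=
    (2 `^ p)%:E * (node_energy u + node_energy g))%E.
  apply: esum_le_scaleD => // x; rewrite ?mulr_ge0 ?powR_ge0//.
  by rewrite -mulrDr mulrCA ler_wpM2l// powR_normD_le.
rewrite !energyE -ge0_muleDr ?adde_ge0// muleCA.
apply: lee_wpmul2l; first by rewrite lee_fin invr_ge0.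
by rewrite addeACA ge0_muleDr ?adde_ge0//; exact: leeD.
Qed.

Lemma DpD (u g : X -> R) : Dp b c p u -> Dp b c p g -> Dp b c p (u \+ g)%R.
Proof.
move=> Du Dg; apply: le_lt_trans (energyD_le u g) _.
by rewrite lte_mul_pinfty ?lee_fin ?powR_ge0 ?lte_add_pinfty.
Qed.

Hypothesis b_sym : forall x y, b x y = b y x.
Hypothesis degree_fin :
  forall x, (\esum_(y in [set: X]) (b x y)%:E < +oo)%E.

Let degree x := fine (\esum_(y in [set: X]) (b x y)%:E).

Let degreeE x : \esum_(y in [set: X]) (b x y)%:E = (degree x)%:E.
Proof.
rewrite fineK// ge0_fin_numE ?degree_fin// esum_ge0// => y _.
by rewrite lee_fin.
Qed.

Let degree_ge0 x : 0 <= degree x.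
Proof. by rewrite -lee_fin -degreeE esum_ge0// => y _; rewrite lee_fin. Qed.

Lemma esum_edge_swap (F : X -> R) :
  \esum_(xy in [set: X * X]) (b xy.1 xy.2 * F xy.2)%:E =
  \esum_(xy in [set: X * X]) (b xy.1 xy.2 * F xy.1)%:E.
Proof.
rewrite (reindex_esum [set: X * X] _ (fun xy => (xy.2, xy.1))).
  by apply: eq_esum => -[x y] _ /=; rewrite b_sym.
by split=> [//|[x1 y1] [x2 y2] _ _ [-> ->]//|[x y] _]; exists (y, x).
Qed.

Lemma esum_edge_degree (F : X -> R) : (forall x, 0 <= F x) ->
  \esum_(xy in [set: X * X]) (b xy.1 xy.2 * F xy.1)%:E =
  \esum_(x in [set: X]) (degree x * F x)%:E.
Proof.
move=> F_ge0.
have -> : [set: X * X] = [set: X] `*`` (fun=> [set: X]) by apply/seteqP; split.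
rewrite -(esum_esum (a := fun x y => (b x y * F x)%:E));
  last by move=> x y _ _; rewrite lee_fin mulr_ge0.
apply: eq_esum => x _.
rewrite (eq_esum (b := fun y => (F x)%:E * (b x y)%:E)%E) => [|y _].
  by rewrite ge0_esumZl ?degreeE -?EFinM 1?mulrC// => y; rewrite lee_fin.
by rewrite -EFinM mulrC.
Qed.

Lemma energy_le_weighted_degree (F g : X -> R) :
  (forall x, `|g x| `^ p <= F x) ->
  (energy b c p g <=
     \esum_(x in [set: X]) ((2 `^ p * degree x + c x) * F x)%:E)%E.
Proof.
move=> gF; have F_ge0 x : 0 <= F x := le_trans (powR_ge0 _ _) (gF x).
have k_ge0 : 0 <= 2 `^ p := powR_ge0 _ _.
set S := \esum_(x in [set: X]) (degree x * F x)%:E.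
set C := \esum_(x in [set: X]) (c x * F x)%:E.
have S_ge0 : (0 <= S)%E by apply: esum_ge0 => x _; rewrite lee_fin mulr_ge0.
have C_ge0 : (0 <= C)%E by apply: esum_ge0 => x _; rewrite lee_fin mulr_ge0.
have edge_le : (edge_energy g <= (2 `^ p)%:E * (S + S))%E.
  apply: le_trans (esum_le_scaleD _ _ _ (fun xy => b xy.1 xy.2 * F xy.1)
    (fun xy => b xy.1 xy.2 * F xy.2) k_ge0 _ _ _) _.
  - by move=> xy; rewrite mulr_ge0.
  - by move=> xy; rewrite mulr_ge0.
  - move=> [x y] /=; rewrite -mulrDr mulrCA ler_wpM2l//.
    rewrite (le_trans (powR_normD_le _ _ (- g y) p_ge0))// ler_wpM2l// normrN.
    exact: lerD.
  by rewrite esum_edge_swap esum_edge_degree.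
have node_le : (node_energy g <= C)%E.
  by apply: le_esum => x _; rewrite lee_fin ler_wpM2l.
have -> : \esum_(x in [set: X]) ((2 `^ p * degree x + c x) * F x)%:E =
    ((2 `^ p)%:E * S + C)%E.
  rewrite -ge0_esumZl// => [|x]; last by rewrite lee_fin mulr_ge0.
  rewrite -esumD// => [|x _|x _]; rewrite ?lee_fin ?mulr_ge0//.
  by apply: eq_esum => x _; rewrite -EFinM -EFinD mulrDl mulrA.
have halfSS : ((2^-1)%:E * (S + S) = S)%E.
  by rewrite -mule2n -mule_natl muleA -EFinM mulVf ?mul1e.
rewrite energyE (@le_trans _ _ ((2^-1)%:E * ((2 `^ p)%:E * (S + S) + C))%E)//.
  by apply: lee_wpmul2l; [rewrite lee_fin invr_ge0|exact: leeD].
rewrite ge0_muleDr ?mule_ge0 ?adde_ge0// muleCA halfSS leeD2l//.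
by rewrite gee_pMl// lee_fin invf_le1// ler1n.
Qed.

Lemma exists_tube_energy_lt (eps : R) :
  countable [set: X] -> 0 < p -> 0 < eps ->
  exists f : X -> R, (forall x, 0 < f x) /\
    forall g : X -> R, (forall x, - f x < g x < f x) ->
      (energy b c p g < eps%:E)%E.
Proof.
move=> /countable_injP[i i_inj] p_gt0 eps_gt0.
pose w x := eps / 2 / (2 ^ (i x).+1)%:R.
pose A x := 2 `^ p * degree x + c x.
pose F x := w x / (1 + A x).
have w_gt0 x : 0 < w x by rewrite !divr_gt0// ltr0n expn_gt0.
have A_ge0 x : 0 <= A x by rewrite addr_ge0 ?mulr_ge0 ?powR_ge0.
have F_gt0 x : 0 < F x by rewrite divr_gt0// ltr_pwDl.
have AF_le x : A x * F x <= w x.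
  by rewrite mulrA ler_pdivrMr ?ltr_pwDl// mulrC ler_pM2l// lerDr.
exists (fun x => F x `^ p^-1); split => [x|g g_tube]; first exact: powR_gt0.
have gF x : `|g x| `^ p <= F x.
  rewrite -[leRHS](powRr1 (ltW (F_gt0 x))) -(mulVf (lt0r_neq0 p_gt0)) powRrM.
  apply: ge0_ler_powR; rewrite ?nnegrE ?powR_ge0 ?(ltW p_gt0)//.
  by apply: ltW; rewrite ltr_norml g_tube.
apply: le_lt_trans (energy_le_weighted_degree _ _ gF) _.
apply: (@le_lt_trans _ _ (eps / 2)%:E); last by rewrite lte_fin; lra.
apply: le_trans (esum_geometric_le _ _ i_inj _); last by rewrite divr_ge0 ?ltW.
by apply: le_esum => x _; rewrite lee_fin; exact: AF_le.
Qed.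

End Energy.

Section InjectivePerturbation.
Context {R : realType}.

Lemma exists_notin_countable (A : set R) : countable A ->
  exists2 t, 0 < t < 1 & ~ A t.
Proof.
move=> cA; apply: boolp.contrapT => noA.
have itvA : `]0, 1[ `<=` A.
  move=> t; rewrite /= in_itv/= => t01; apply: boolp.contrapT => At.
  by apply: noA; exists t.
have : (lebesgue_measure (`]0%R, 1%R[ : set R) <= lebesgue_measure A)%E.
  apply: le_measure => //; rewrite inE; first exact: measurable_itv.
  exact: countable_measurable (fun r => measurable_set1 r) cA.
rewrite (countable_lebesgue_measure0 cA) lebesgue_measure_itv/= lte_fin ltr01.
by rewrite oppr0 adde0 lee_fin ler10.
Qed.

Lemma exists_injective_pos_below {T : Type} (h : T -> R) :
  countable [set: T] -> (forall x, 0 < h x) ->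
  exists2 delta : T -> R, injective delta & forall x, 0 < delta x <= h x.
Proof.
move=> /Pcountable[T' eT]; subst T => h_gt0.
pose a n := if pickle_inv n is Some x then h x else 1.
have a_gt0 n : 0 < a n by rewrite /a; case: pickle_inv.
pose d := fix d n := if n is k.+1 then Num.min (d k) (a k.+1) / 2 else a 0 / 2.
have d_gt0 n : 0 < d n.
  by elim: n => [|n IH]; rewrite /= divr_gt0 ?lt_min ?IH ?a_gt0.
have d_le n : d n <= a n.
  suff : d n <= a n / 2 by have := a_gt0 n; lra.
  by case: n => [|n] //=; rewrite ler_pM2r ?ge_min ?lexx ?orbT.
have d_dec : {homo d : m n / (m < n)%N >-> n < m}.
  apply: homo_ltn => [y x z xy yz|n /=]; first exact: lt_trans yz xy.
  have := d_gt0 n; have : Num.min (d n) (a n.+1) <= d n by rewrite ge_min lexx.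
  lra.
exists (d \o pickle) => [x y /= dxy|x /=].
  apply: (pcan_inj (@pickleK_inv T')); move: dxy.
  by case: (ltngtP (pickle x) (pickle y)) => // /d_dec + dxy; rewrite dxy ltxx.
by have := d_le (pickle x); rewrite d_gt0 /a pickleK_inv.
Qed.

Lemma exists_injective_shift {T : Type} (u delta : T -> R) :
  countable [set: T] -> injective delta ->
  exists2 t, 0 < t < 1 & injective (fun x => u x + t * delta x).
Proof.
move=> cT delta_inj.
(* On the diagonal the division by 0 yields the harmless value 0. *)
pose collision xy := (u xy.2 - u xy.1) / (delta xy.1 - delta xy.2).
have [|t t01 t_safe] := exists_notin_countable (range collision).
  apply: card_le_trans (card_image_le _ _) _.
  by rewrite -setXTT; exact: countableX.
exists t => // x y uxy; apply: boolp.contrapT => xy.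
apply: t_safe; exists (x, y) => //=.
have dxy : delta x - delta y != 0 by rewrite subr_eq0; apply/eqP => /delta_inj.
by rewrite /collision/= -(mulfK dxy t); congr (_ / _); move: uxy; lra.
Qed.

Lemma exists_injective_near {T : Type} (u h : T -> R) :
  countable [set: T] -> (forall x, 0 < h x) ->
  exists2 v : T -> R, injective v & forall x, `|v x - u x| < h x.
Proof.
move=> cT h_gt0.
have [delta delta_inj delta_le] := exists_injective_pos_below h cT h_gt0.
have [t /andP[t_gt0 t_lt1] v_inj] :=
  exists_injective_shift u delta cT delta_inj.
exists (fun x => u x + t * delta x) => // x.
have /andP[delta_gt0 delta_le_h] := delta_le x.
rewrite addrC addKr normrM !gtr0_norm// (lt_le_trans _ delta_le_h)//.
by rewrite gtr_pMl.
Qed.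

End InjectivePerturbation.

Theorem lemma3p13 (R : realType) (X : choiceType)
  (b : X -> X -> R) (m : X -> R) (c : X -> R) (p : R) :
  weighted_graph b m c -> 1 <= p ->
  (forall eps : R, 0 < eps ->
     exists f : X -> R, (forall x, 0 < f x) /\
       forall g : X -> R, (forall x, - f x < g x < f x) ->
         (energy b c p g < eps%:E)%E)
  /\
  (forall (eps : R) (u : X -> R), 0 < eps -> Dp b c p u ->
     exists ue : X -> R,
       [/\ Dp b c p ue,
           (forall x y, x <> y -> ue x <> ue y),
           (sup_dist u ue < eps%:E)%E
         & (energy b c p (fun x => (u x - ue x)%R) < eps%:E)%E]).
Proof.
move=> [card_X [b_sym [b_ge0 [_ [degree_fin [_ [c_ge0 _]]]]]]] p_ge1.
have p_gt0 : 0 < p := lt_le_trans ltr01 p_ge1.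
have cX : countable [set: X] by rewrite (eq_countable card_X).
have tube eps := exists_tube_energy_lt b c p b_ge0 c_ge0 (ltW p_gt0) b_sym
  degree_fin eps cX p_gt0.
split=> [//|eps u eps_gt0 Du].
have [f [f_gt0 f_tube]] := tube eps eps_gt0.
have [|v v_inj v_near] := exists_injective_near u
    (fun x => Num.min (f x) (eps / 2)) cX.
  by move=> x; rewrite lt_min f_gt0 divr_gt0.
have v_near_f x : - f x < v x - u x < f x.
  by rewrite -ltr_norml (lt_le_trans (v_near x))// ge_min lexx.
exists v; split => // [|x y xy /v_inj//||].
- have -> : v = (u \+ (v \- u))%R by apply/funext => x /=; rewrite addrC subrK.
  apply: DpD => //; first exact: ltW.
  exact: lt_trans (f_tube _ v_near_f) (ltry _).
- apply: (@le_lt_trans _ _ (eps / 2)%:E); last by rewrite lte_fin; lra.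
  apply: ge_ereal_sup => _ [x _ <-]; rewrite lee_fin distrC.
  by rewrite (le_trans (ltW (v_near x)))// ge_min lexx orbT.
- by apply: f_tube => x; rewrite -opprB ltrNl opprK andbC -ltrNl v_near_f.
Qed.
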